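(* Under Assumptions 1-MP, 2-MP (a),(b),(c) and 3-MP, let $g\in\mathcal{G}\setminus\{\mathcal{T}+1\}$ and $1\le t_1\le t_2<g\le t_3\le t_4\le\mathcal{T}$, and let $d\in\mathcal{D}_+$. (1) If 4-MP(a) holds and $(a,b)\mapsto\overline{ATT}^{(t_3,t_4)}(g,a|g,b)$ is differentiable on $\mathcal{D}_+\times\mathcal{D}_+$, then $$\frac{\partial\,\mathbb{E}[\bar Y^{(t_3,t_4)}-\bar Y^{(t_1,t_2)}\mid G=g,D=d]}{\partial d}=\overline{ACRT}^{(t_3,t_4)}(g,d|g,d)+\frac{\partial\overline{ATT}^{(t_3,t_4)}(g,d|g,l)}{\partial l}\Big|_{l=d}.$$ (2) If 5-MP holds, then $\frac{\partial\,\mathbb{E}[\bar Y^{(t_3,t_4)}-\bar Y^{(t_1,t_2)}\mid G=g,D=d]}{\partial d}=\overline{ACR}^{(t_3,t_4)}(g,d)$.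
   Context: Multi-period setup. Periods $t=1,\dots,\mathcal{T}$. Each unit has a timing group $G\in\mathcal{G}\subseteq\{2,\dots,\mathcal{T}+1\}$ ($G=\mathcal{T}+1$ means never treated) and a dose $D\ge0$, with $D=0$ exactly for never-treated units and $D\in\mathcal{D}_+$ for units with $G\le\mathcal{T}$. Potential outcomes $Y_t(g,d)$; $Y_t(0):=Y_t(\mathcal{T}+1,0)$. $W_t:=D\mathbf{1}\{t\ge G\}$. Observed $Y_t=Y_t(0)\mathbf{1}\{t<G\}+Y_t(G,D)\mathbf{1}\{t\ge G\}$; finite means. 1-MP: i.i.d. sampling. 2-MP: (a) support of $D$ is $\{0\}\cup\mathcal{D}_+$, $\mathbb{P}(D=0)>0$, every $d\in\mathcal{D}_+$ in the support of $D\mid G=g$ for $g\le\mathcal{T}$; (b) $\mathcal{D}_+=[d_L,d_U]$, $0<d_L<d_U<\infty$; (c) $d\mapsto\mathbb{E}[\Delta Y_t\mid G=g,D=d]$ continuously differentiable on $\mathcal{D}_+$. 3-MP: (a) $Y_t(g,d)=Y_t(0)$ for $t<g$; (b) $W_1=0$, $W_{t-1}=d\Rightarrow W_t=d$. 4-MP(a): for all $g\in\mathcal{G}$, $t=2,\dots,\mathcal{T}$, $d\in\mathcal{D}$: $\mathbb{E}[Y_t(0)-Y_{t-1}(0)\mid G=g,D=d]=\mathbb{E}[Y_t(0)-Y_{t-1}(0)\mid D=0]$. 5-MP: for all $g\in\mathcal{G}$, $t=2,\dots,\mathcal{T}$, $d\in\mathcal{D}$: $\mathbb{E}[Y_t(g,d)-Y_{t-1}(0)\mid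 G=g,D=d]=\mathbb{E}[Y_t(g,d)-Y_{t-1}(0)\mid G=g]$ and $\mathbb{E}[Y_t(0)-Y_{t-1}(0)\mid G=g,D=d]=\mathbb{E}[Y_t(0)-Y_{t-1}(0)\mid D=0]$. Notation: $\bar Y^{(t_1,t_2)}:=\frac1{t_2-t_1+1}\sum_{t=t_1}^{t_2}Y_t$. $ATE(g,t,d):=\mathbb{E}[Y_t(g,d)-Y_t(0)\mid G=g]$; $\overline{ATE}^{(t_3,t_4)}(g,d):=\frac1{t_4-t_3+1}\sum_{t=t_3}^{t_4}ATE(g,t,d)$, $\overline{ACR}^{(t_3,t_4)}(g,d):=\partial\overline{ATE}^{(t_3,t_4)}(g,d)/\partial d$; $\overline{ATT}^{(t_3,t_4)}(g,a|g,b):=\mathbb{E}[\frac1{t_4-t_3+1}\sum_{t=t_3}^{t_4}(Y_t(g,a)-Y_t(0))\mid G=g,D=b]$; $\overline{ACRT}^{(t_3,t_4)}(g,d|g,d):=\partial\overline{ATT}^{(t_3,t_4)}(g,l|g,d)/\partial l|_{l=d}$. *)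

From HB Require Import structures.
From mathcomp Require Import all_boot all_order all_algebra.
From mathcomp Require Import all_classical all_reals all_analysis.
Set Implicit Arguments. Unset Strict Implicit. Unset Printing Implicit Defensive.
Import Order.TTheory GRing.Theory Num.Theory.
Import numFieldNormedType.Exports.
Local Open Scope classical_set_scope.
Local Open Scope ring_scope.

Definition Dplus (R : realType) (dL dU : R) : set R := [set x : R | dL <= x <= dU].

(* f has derivative l at x relative to the set I (one-sided at endpoints). *)
Definition deriv_within (R : realType) (I : set R) (f : R -> R) (x l : R) : Prop :=
  (fun y => (f y - f x) / (y - x)) @ within [set y | I y /\ y != x] (nbhs x) --> l.

(* (a,b) |-> f a b is (jointly, Frechet) differentiable at (a,b) relative to I x I,
   with partial derivatives pa, pb. *)
Definition differentiable2_within (R : realType) (I : set R) (f : R -> R -> R)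
    (a b pa pb : R) : Prop :=
  (fun hk : R * R => (f hk.1 hk.2 - f a b - (pa * (hk.1 - a) + pb * (hk.2 - b)))
                      / (`|hk.1 - a| + `|hk.2 - b|))
    @ within [set p : R * R | I p.1 /\ I p.2 /\ p != (a, b)] (nbhs (a, b)) --> 0.

Definition avg (R : realType) (t1 t2 : nat) (f : nat -> R) : R :=
  (\sum_(t1 <= t < t2.+1) f t) / (t2.+1 - t1)%:R.

Section Model.
Context (d0 : measure_display) (Omega : measurableType d0) (R : realType).
(* mu g d : regular conditional law of the potential outcomes given (G = g, D = d);
   nuD g : conditional law of D given G = g. *)
Variables (mu : nat -> R -> probability Omega R) (nuD : nat -> probability R R)
          (Y : nat -> nat -> R -> Omega -> R) (T : nat).

(* Y_t(0) := Y_t(T+1, 0) *)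
Definition Y0 (t : nat) : Omega -> R := Y t T.+1 0.

Definition CE (g : nat) (d : R) (X : Omega -> R) : R := Rintegral (mu g d) setT X.

(* E[X | D = 0] = E[X | G = T+1, D = 0] (D = 0 exactly for never-treated units) *)
Definition CE0 (X : Omega -> R) : R := CE T.+1 0 X.

Definition CEG (g : nat) (X : Omega -> R) : R :=
  Rintegral (nuD g) setT (fun d' => CE g d' X).

(* observed outcome Y_t on the event {G = g, D = d} *)
Definition Yobs (g : nat) (d : R) (t : nat) : Omega -> R :=
  fun w => if (t < g)%N then Y0 t w else Y t g d w.

Definition ECondDiff (t1 t2 t3 t4 g : nat) (d : R) : R :=
  CE g d (fun w => avg t3 t4 (fun t => Yobs g d t w) - avg t1 t2 (fun t => Yobs g d t w)).

Definition EDeltaY (t g : nat) (d : R) : R :=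
  CE g d (fun w => Yobs g d t w - Yobs g d t.-1 w).

Definition ATTbar (t3 t4 g : nat) (a b : R) : R :=
  CE g b (fun w => avg t3 t4 (fun t => Y t g a w - Y0 t w)).

Definition ATE (g t : nat) (d : R) : R := CEG g (fun w => Y t g d w - Y0 t w).
Definition ATEbar (t3 t4 g : nat) (d : R) : R := avg t3 t4 (fun t => ATE g t d).
End Model.

(* Parallel trends make the
   untreated means E[Y_t(0) | G = g, D = y] equal to their period-1 value
   plus a drift that does not depend on y, so on the dose support the
   contrast differs from ATTbar(g, y | g, y) (under 4-MP(a)) resp. from
   ATEbar(g, y) (under 5-MP) by a constant.  Part (1) then follows from the
   diagonal chain rule, part (2) from 2-MP(c), which makes the contrast
   differentiable as an average of sums of differentiable mean increments. *)

From HB Require Import structures.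
From mathcomp Require Import all_boot all_order all_algebra.
From mathcomp Require Import all_classical all_reals all_analysis.
From mathcomp Require Import ring lra zify.
Set Implicit Arguments. Unset Strict Implicit. Unset Printing Implicit Defensive.
Import Order.TTheory GRing.Theory Num.Theory.
Import numFieldNormedType.Exports.
Local Open Scope classical_set_scope.
Local Open Scope ring_scope.

Section DerivWithin.
Context (R : realType) (I : set R).

Lemma deriv_within_shift (f h : R -> R) (c x l : R) : I x ->
  (forall y, I y -> h y = f y + c) ->
  deriv_within I f x l -> deriv_within I h x l.
Proof.
move=> Ix hf; apply: cvg_trans; apply: near_eq_cvg.
rewrite near_withinE; apply: nearW => y [Iy _].
by rewrite !hf // opprD addrACA subrr addr0.
Qed.

Lemma deriv_within_cst (c x : R) : deriv_within I (fun=> c) x 0.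
Proof.
rewrite /deriv_within (_ : (fun y => _) = fun=> 0); first exact: cvg_cst.
by apply: funext => y; rewrite subrr mul0r.
Qed.

Lemma deriv_within_add (f h : R -> R) (x l m : R) :
  deriv_within I f x l -> deriv_within I h x m ->
  deriv_within I (fun y => f y + h y) x (l + m).
Proof.
move=> Hf Hh; rewrite /deriv_within (_ : (fun y => _) =
  fun y => (f y - f x) / (y - x) + (h y - h x) / (y - x)); first exact: cvgD.
by apply: funext => y; rewrite -mulrDl opprD addrACA.
Qed.

Lemma deriv_within_sub (f h : R -> R) (x l m : R) :
  deriv_within I f x l -> deriv_within I h x m ->
  deriv_within I (fun y => f y - h y) x (l - m).
Proof.
move=> Hf Hh; rewrite /deriv_within (_ : (fun y => _) =
  fun y => (f y - f x) / (y - x) - (h y - h x) / (y - x)); first exact: cvgB.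
by apply: funext => y; rewrite -mulrBl; congr (_ * _); ring.
Qed.

Lemma deriv_within_scale (f : R -> R) (c x l : R) :
  deriv_within I f x l -> deriv_within I (fun y => c * f y) x (c * l).
Proof.
move=> Hf; rewrite /deriv_within (_ : (fun y => _) =
  fun y => c * ((f y - f x) / (y - x))); first exact: cvgMr.
by apply: funext => y; rewrite mulrA mulrBr.
Qed.

Lemma deriv_within_sum (J : eqType) (s : seq J) (F : J -> R -> R) (l : J -> R) x :
  (forall j, j \in s -> deriv_within I (F j) x (l j)) ->
  deriv_within I (fun y => \sum_(j <- s) F j y) x (\sum_(j <- s) l j).
Proof.
elim: s => [|j s IH] Hs.
  rewrite big_nil (_ : (fun y => _) = fun=> 0); first exact: deriv_within_cst.
  by apply: funext => y; rewrite big_nil.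
rewrite big_cons (_ : (fun y => _) = fun y => F j y + \sum_(i <- s) F i y).
  apply: deriv_within_add; first by apply: Hs; rewrite mem_head.
  by apply: IH => i si; apply: Hs; rewrite in_cons si orbT.
by apply: funext => y; rewrite big_cons.
Qed.

Lemma deriv_within_avg (F : nat -> R -> R) (l : nat -> R) t1 t2 x :
  (forall t, (t1 <= t <= t2)%N -> deriv_within I (F t) x (l t)) ->
  deriv_within I (fun y => avg t1 t2 (fun t => F t y)) x (avg t1 t2 l).
Proof.
move=> HF; rewrite /avg mulrC (_ : (fun y => _) =
  fun y => (t2.+1 - t1)%:R^-1 * \sum_(t1 <= t < t2.+1) F t y).
  by apply: deriv_within_scale; apply: deriv_within_sum => t; rewrite mem_index_iota => /HF.
by apply: funext => y; rewrite mulrC.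
Qed.

Lemma deriv_within_line (f : R -> R -> R) (a b pa pb x u v : R) :
  (u != 0) || (v != 0) ->
  (forall y, I y -> y != x -> I (a + u * (y - x)) /\ I (b + v * (y - x))) ->
  differentiable2_within I f a b pa pb ->
  deriv_within I (fun y => f (a + u * (y - x)) (b + v * (y - x))) x (pa * u + pb * v).
Proof.
move=> uv Iline Hf; apply/cvgrPdist_lt => e e0.
have k0 : 0 < `|u| + `|v|.
  by case/orP: uv => ?; [apply: ltr_pwDl | apply: ltr_pwDr]; rewrite ?normr_gt0.
have ek0 : 0 < e / (`|u| + `|v|) by rewrite divr_gt0.
move/cvgrPdist_lt: Hf => /(_ _ ek0); rewrite near_withinE => Hnear.
have line_cvg : (a + u * (y - x), b + v * (y - x)) @[y --> x] --> (a, b).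
  have line1 (c w : R) : (c + w * (y - x)) @[y --> x] --> c.
    rewrite -[X in _ --> X](addr0 c) -(mulr0 w) -(subrr x).
    apply: cvgD; first exact: cvg_cst.
    by apply: cvgMr; apply: cvgB; [exact: cvg_id | exact: cvg_cst].
  exact: (@cvg_pair R R R (nbhs x) (nbhs a) (nbhs b) _ _ _
    (fun y => a + u * (y - x)) (fun y => b + v * (y - x)) (line1 a u) (line1 b v)).
rewrite near_withinE; move: (line_cvg _ Hnear); rewrite nbhs_filterE /=.
apply: filterS => y /= Hy [Iy yx]; rewrite subrr !mulr0 !addr0.
have hx0 : y - x != 0 by rewrite subr_eq0.
have [Ia Ib] := Iline y Iy yx.
have shift (c w : R) : c + w - c = w by rewrite addrC addKr.
have hp : (a + u * (y - x), b + v * (y - x)) != (a, b).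
  rewrite xpair_eqE negb_and.
  by case/orP: uv => [u0|v0]; apply/orP; [left|right]; rewrite -subr_eq0 shift mulf_neq0.
have := Hy (conj Ia (conj Ib hp)); rewrite !shift sub0r normrN.
set N := f _ _ - f a b - _.
have -> : (f (a + u * (y - x)) (b + v * (y - x)) - f a b) / (y - x)
    = pa * u + pb * v + N / (y - x) by rewrite /N; field.
rewrite opprD addNKr normrN !(normrM _ (y - x)) -mulrDl ltr_pdivlMr //.
have hn0 : `|y - x| != 0 by rewrite normr_eq0.
rewrite !normrM !normfV normrM normr_id (ger0_norm (ltW k0)).
suff -> : `|N| / ((`|u| + `|v|) * `|y - x|) * (`|u| + `|v|) = `|N| / `|y - x| by [].
by field; rewrite hn0 lt0r_neq0.
Qed.

Lemma deriv_within_partial1 (f : R -> R -> R) (a b pa pb : R) : I b ->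
  differentiable2_within I f a b pa pb -> deriv_within I (fun l => f l b) a pa.
Proof.
move=> Ib Hf; have := @deriv_within_line f a b pa pb a 1 0 _ _ Hf.
rewrite mulr1 mulr0 addr0 (_ : (fun y => _) = fun l => f l b).
- by apply; rewrite ?oner_neq0 // => y Iy _; rewrite mul1r mul0r addr0 addrC subrK.
by apply: funext => y; rewrite mul1r mul0r addr0 addrC subrK.
Qed.

Lemma deriv_within_partial2 (f : R -> R -> R) (a b pa pb : R) : I a ->
  differentiable2_within I f a b pa pb -> deriv_within I (fun l => f a l) b pb.
Proof.
move=> Ia Hf; have := @deriv_within_line f a b pa pb b 0 1 _ _ Hf.
rewrite mulr1 mulr0 add0r (_ : (fun y => _) = fun l => f a l).
- by apply; rewrite ?oner_neq0 ?orbT // => y Iy _; rewrite mul1r mul0r addr0 addrC subrK.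
by apply: funext => y; rewrite mul1r mul0r addr0 addrC subrK.
Qed.

Lemma deriv_within_diag (f : R -> R -> R) (a pa pb : R) :
  differentiable2_within I f a a pa pb -> deriv_within I (fun l => f l l) a (pa + pb).
Proof.
move=> Hf; have := @deriv_within_line f a a pa pb a 1 1 _ _ Hf.
rewrite !mulr1 (_ : (fun y => _) = fun l => f l l).
- by apply; rewrite ?oner_neq0 // => y Iy _; rewrite mul1r addrC subrK.
by apply: funext => y; rewrite mul1r addrC subrK.
Qed.

End DerivWithin.
Section Linearity.
Context (d0 : measure_display) (Omega : measurableType d0) (R : realType)
  (P : measure Omega R).

Lemma integrable_sub_fun (f h : Omega -> R) :
  P.-integrable setT (EFin \o f) -> P.-integrable setT (EFin \o h) ->
  P.-integrable setT (EFin \o (fun w => f w - h w)).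
Proof.
move=> Hf Hh; have := integrableB measurableT Hf Hh.
by apply: (eq_integrable measurableT) => w _ /=; rewrite EFinB.
Qed.

Lemma integrable_sum_fun (J : Type) (s : seq J) (F : J -> Omega -> R) :
  (forall j, P.-integrable setT (EFin \o F j)) ->
  P.-integrable setT (EFin \o (fun w => \sum_(j <- s) F j w)).
Proof.
move=> HF; have := integrable_sum measurableT s (P := predT)
  (h := fun j w => (F j w)%:E) (fun j _ => HF j).
by apply: (eq_integrable measurableT) => w _ /=; rewrite sumEFin.
Qed.

Lemma Rintegral_sum (J : Type) (s : seq J) (F : J -> Omega -> R) :
  (forall j, P.-integrable setT (EFin \o F j)) ->
  Rintegral P setT (fun w => \sum_(j <- s) F j w) = \sum_(j <- s) Rintegral P setT (F j).
Proof.
move=> HF; elim: s => [|j s IH].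
  rewrite big_nil; under eq_Rintegral do rewrite big_nil.
  by rewrite Rintegral_cst // mul0r.
rewrite big_cons; under eq_Rintegral do rewrite big_cons.
by rewrite RintegralD // ?IH //; exact: integrable_sum_fun.
Qed.

Lemma integrable_avg (F : nat -> Omega -> R) t1 t2 :
  (forall t, P.-integrable setT (EFin \o F t)) ->
  P.-integrable setT (EFin \o (fun w => avg t1 t2 (fun t => F t w))).
Proof.
move=> HF; have := integrableZr measurableT (t2.+1 - t1)%:R^-1
  (@integrable_sum_fun nat (index_iota t1 t2.+1) F HF).
by apply: (eq_integrable measurableT).
Qed.

Lemma Rintegral_avg (F : nat -> Omega -> R) t1 t2 :
  (forall t, P.-integrable setT (EFin \o F t)) ->
  Rintegral P setT (fun w => avg t1 t2 (fun t => F t w))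
  = avg t1 t2 (fun t => Rintegral P setT (F t)).
Proof.
by move=> HF; rewrite /avg RintegralZr ?Rintegral_sum //; exact: integrable_sum_fun.
Qed.

End Linearity.

Section Averages.
Context (R : realType).

Lemma avg_eq t1 t2 (f h : nat -> R) :
  (forall t, (t1 <= t <= t2)%N -> f t = h t) -> avg t1 t2 f = avg t1 t2 h.
Proof. by move=> fh; rewrite /avg; congr (_ / _); apply: eq_big_nat => t /fh. Qed.

Lemma avg_sub t1 t2 (f h : nat -> R) :
  avg t1 t2 (fun t => f t - h t) = avg t1 t2 f - avg t1 t2 h.
Proof. by rewrite /avg big_split /= sumrN mulrDl mulNr. Qed.

Lemma avg_cst_add t1 t2 (c : R) (f : nat -> R) : (t1 <= t2)%N ->
  avg t1 t2 (fun t => c + f t) = c + avg t1 t2 f.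
Proof.
move=> t12; rewrite /avg big_split /= sumr_const_nat mulrDl -[c *+ _]mulr_natr mulfK //.
by rewrite pnatr_eq0 -lt0n subn_gt0 ltnS.
Qed.

Lemma telescope (B c : nat -> R) T :
  (forall t, (2 <= t <= T)%N -> B t - B t.-1 = c t) ->
  forall t, (1 <= t <= T)%N -> B t = B 1%N + \sum_(2 <= u < t.+1) c u.
Proof.
move=> Hc; elim=> [|t IH] // /andP[t1 tT].
case: t IH t1 tT => [|t] IH _ tT; first by rewrite big_geq // addr0.
rewrite big_nat_recr //= addrA -IH; last by rewrite /= ltnW.
have := Hc t.+2; rewrite tT /= => /(_ isT); lra.
Qed.

End Averages.

Section Model.
Context (d0 : measure_display) (Omega : measurableType d0) (R : realType).
Variables (mu : nat -> R -> probability Omega R) (nuD : nat -> probability R R)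
  (Y : nat -> nat -> R -> Omega -> R) (T g : nat) (I : set R).
Hypothesis Y_integrable :
  forall t g' a y, (mu g y).-integrable setT (EFin \o Y t g' a).

Lemma CE_Ydiff y t ga a s gb b :
  CE mu g y (fun w => Y t ga a w - Y s gb b w) = CE mu g y (Y t ga a) - CE mu g y (Y s gb b).
Proof. by rewrite /CE RintegralB //; apply: Y_integrable. Qed.

Lemma Yobs_integrable y t : (mu g y).-integrable setT (EFin \o Yobs Y T g y t).
Proof. by rewrite /Yobs; case: (t < g)%N; apply: Y_integrable. Qed.

Definition obs_mean (t : nat) (y : R) : R := CE mu g y (Yobs Y T g y t).

Definition untreated_mean (t : nat) (y : R) : R := CE mu g y (Y0 Y T t).

Definition untreated_trend (t : nat) : R :=
  CE0 mu T (fun w => Y0 Y T t w - Y0 Y T t.-1 w).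
Definition untreated_drift (t : nat) : R := \sum_(2 <= u < t.+1) untreated_trend u.

Lemma obs_mean_post y t : (g <= t)%N -> obs_mean t y = CE mu g y (Y t g y).
Proof. by move=> gt; rewrite /obs_mean /Yobs ltnNge gt. Qed.

Lemma obs_mean_pre y t : (t < g)%N -> obs_mean t y = untreated_mean t y.
Proof. by move=> tg; rewrite /obs_mean /Yobs tg. Qed.

Lemma ECondDiff_obs_mean t1 t2 t3 t4 y :
  ECondDiff mu Y T t1 t2 t3 t4 g y
  = avg t3 t4 (obs_mean^~ y) - avg t1 t2 (obs_mean^~ y).
Proof.
rewrite /ECondDiff /CE RintegralB ?integrable_avg ?Rintegral_avg //;
  exact: Yobs_integrable.
Qed.

Lemma ATTbar_diag t3 t4 y : ATTbar mu Y T t3 t4 g y y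
  = avg t3 t4 (fun t => CE mu g y (Y t g y)) - avg t3 t4 (untreated_mean^~ y).
Proof.
rewrite /ATTbar /CE Rintegral_avg => [|t]; last first.
  by apply: integrable_sub_fun; apply: Y_integrable.
by rewrite -avg_sub; apply: avg_eq => t _; exact: CE_Ydiff.
Qed.

Variables t1 t2 t3 t4 : nat.
Hypothesis periods :
  [/\ (1 <= t1)%N, (t1 <= t2)%N, (t2 < g)%N, (g <= t3)%N & (t3 <= t4 <= T)%N].

(* 2-MP(c) makes the outcome contrast differentiable: by telescoping, each
   mean outcome is its period-1 value plus the accumulated mean increments
   E[Delta Y_u | G = g, D = y], and the period-1 value cancels. *)
Lemma obs_mean_increments y t : (1 <= t <= T)%N ->
  obs_mean t y = obs_mean 1 y + \sum_(2 <= u < t.+1) EDeltaY mu Y T u g y.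
Proof.
move: t; apply: telescope => u _.
by rewrite /EDeltaY /CE RintegralB //; apply: Yobs_integrable.
Qed.

Lemma ECondDiff_deriv (l : nat -> R) x :
  (forall u, (2 <= u <= T)%N -> deriv_within I (EDeltaY mu Y T u g) x (l u)) ->
  deriv_within I (ECondDiff mu Y T t1 t2 t3 t4 g) x
    (avg t3 t4 (fun t => \sum_(2 <= u < t.+1) l u)
     - avg t1 t2 (fun t => \sum_(2 <= u < t.+1) l u)).
Proof.
case: periods => t1_ge1 t12 t2g gt3 /andP[t34 t4T] hl.
pose S t y := \sum_(2 <= u < t.+1) EDeltaY mu Y T u g y.
have -> : ECondDiff mu Y T t1 t2 t3 t4 g
    = fun y => avg t3 t4 (S^~ y) - avg t1 t2 (S^~ y).
  apply: funext => y; rewrite ECondDiff_obs_mean.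
  rewrite (@avg_eq _ t3 t4 _ (fun t => obs_mean 1 y + S t y)); last first.
    by move=> t /andP[? ?]; apply: obs_mean_increments; apply/andP; split; lia.
  rewrite (@avg_eq _ t1 t2 _ (fun t => obs_mean 1 y + S t y)); last first.
    by move=> t /andP[? ?]; apply: obs_mean_increments; apply/andP; split; lia.
  rewrite !avg_cst_add //; ring.
have S_deriv t : (t <= T)%N -> deriv_within I (S t) x (\sum_(2 <= u < t.+1) l u).
  move=> tT; apply: deriv_within_sum => u; rewrite mem_index_iota => /andP[? ?].
  by apply: hl; apply/andP; split; lia.
by apply: deriv_within_sub; apply: deriv_within_avg => t /andP[_ ?];
  apply: S_deriv; lia.
Qed.

(* Parallel trends for group g on the dose support (4-MP(a), second half of 5-MP):
   the untreated means of all dose groups move in parallel, so they differ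
   from their period-1 value by the same drift. *)
Section ParallelTrends.
Hypothesis parallel_trends : forall t, (2 <= t <= T)%N -> forall y, I y ->
  CE mu g y (fun w => Y0 Y T t w - Y0 Y T t.-1 w) = untreated_trend t.

Lemma untreated_mean_drift y : I y -> forall t, (1 <= t <= T)%N ->
  untreated_mean t y = untreated_mean 1 y + untreated_drift t.
Proof.
by move=> Iy; apply: telescope => t ht; rewrite -(parallel_trends ht Iy) CE_Ydiff.
Qed.

Lemma ECondDiff_ATTbar y : I y ->
  ECondDiff mu Y T t1 t2 t3 t4 g y
  = ATTbar mu Y T t3 t4 g y y + (avg t3 t4 untreated_drift - avg t1 t2 untreated_drift).
Proof.
case: periods => t1_ge1 t12 t2g gt3 /andP[t34 t4T] Iy.
rewrite ECondDiff_obs_mean ATTbar_diag.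
rewrite (@avg_eq _ t3 t4 (obs_mean^~ y) (fun t => CE mu g y (Y t g y))); last first.
  by move=> t /andP[? _]; apply: obs_mean_post; lia.
rewrite (@avg_eq _ t1 t2 (obs_mean^~ y) (fun t => untreated_mean 1 y + untreated_drift t)).
  rewrite (@avg_eq _ t3 t4 (untreated_mean^~ y)
             (fun t => untreated_mean 1 y + untreated_drift t)).
    by rewrite !avg_cst_add //; ring.
  by move=> t /andP[? ?]; apply: untreated_mean_drift => //; apply/andP; split; lia.
move=> t /andP[? ?]; rewrite obs_mean_pre; last by lia.
by apply: untreated_mean_drift => //; apply/andP; split; lia.
Qed.

Hypothesis CE_integrable_G :
  forall t g' a, (nuD g).-integrable setT (EFin \o (fun y => CE mu g y (Y t g' a))).

(* 5-MP, first half: the mean trend from the untreated period-(t-1) outcome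
   to the treated outcome does not depend on the dose within group g. *)
Hypothesis conditional_trends : forall t, (2 <= t <= T)%N -> forall y, I y ->
  CE mu g y (fun w => Y t g y w - Y0 Y T t.-1 w)
  = CEG mu nuD g (fun w => Y t g y w - Y0 Y T t.-1 w).

Definition group_trend (t : nat) : R :=
  CEG mu nuD g (Y0 Y T t) - CEG mu nuD g (Y0 Y T t.-1).

Lemma CEG_Ydiff t ga a s gb b :
  CEG mu nuD g (fun w => Y t ga a w - Y s gb b w)
  = CEG mu nuD g (Y t ga a) - CEG mu nuD g (Y s gb b).
Proof.
rewrite /CEG (_ : (fun y => _) = fun y => CE mu g y (Y t ga a) - CE mu g y (Y s gb b)).
  by rewrite RintegralB //; apply: CE_integrable_G.
by apply: funext => y; rewrite CE_Ydiff.
Qed.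

Lemma ATE_post y t : I y -> (2 <= t <= T)%N ->
  ATE mu nuD Y T g t y = CE mu g y (Y t g y) - untreated_mean t.-1 y - group_trend t.
Proof.
move=> Iy ht; have := conditional_trends ht Iy.
rewrite CE_Ydiff CEG_Ydiff /ATE CEG_Ydiff /group_trend /untreated_mean => ->.
by rewrite opprB addrA subrK.
Qed.

Lemma ATEbar_ECondDiff y : (2 <= g)%N -> I y ->
  ATEbar mu nuD Y T t3 t4 g y = ECondDiff mu Y T t1 t2 t3 t4 g y
    + (avg t1 t2 untreated_drift - avg t3 t4 (fun t => untreated_drift t.-1)
       - avg t3 t4 group_trend).
Proof.
case: periods => t1_ge1 t12 t2g gt3 /andP[t34 t4T] g2 Iy.
rewrite /ATEbar ECondDiff_obs_mean.
rewrite (@avg_eq _ t3 t4 (fun t => ATE mu nuD Y T g t y) (fun t =>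
    CE mu g y (Y t g y) - (untreated_mean 1 y + untreated_drift t.-1) - group_trend t)).
  rewrite (@avg_eq _ t3 t4 (obs_mean^~ y) (fun t => CE mu g y (Y t g y))).
    rewrite (@avg_eq _ t1 t2 (obs_mean^~ y)
               (fun t => untreated_mean 1 y + untreated_drift t)).
      by rewrite 2!avg_sub !avg_cst_add //; ring.
    move=> t /andP[? ?]; rewrite obs_mean_pre; last by lia.
    by apply: untreated_mean_drift => //; apply/andP; split; lia.
  by move=> t /andP[? _]; apply: obs_mean_post; lia.
move=> t /andP[? ?]; rewrite ATE_post //; last by apply/andP; split; lia.
by rewrite untreated_mean_drift //; apply/andP; split; lia.
Qed.

End ParallelTrends.

End Model.

Theorem lemma11 (d0 : measure_display) (Omega : measurableType d0) (R : realType)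
  (T : nat) (Gset : seq nat)
  (mu : nat -> R -> probability Omega R) (nuD : nat -> probability R R)
  (Y : nat -> nat -> R -> Omega -> R) (dL dU : R)
  (* timing groups lie in {2,...,T+1}, and the never-treated group is present *)
  (hG : forall g, g \in Gset -> (2 <= g <= T.+1)%N)
  (hNever : T.+1 \in Gset)
  (* finite means / measurability *)
  (hmeas : forall t g a, measurable_fun setT (Y t g a))
  (hint : forall t g a g' d, (mu g' d).-integrable setT (EFin \o Y t g a))
  (hintG : forall t g a g', (nuD g').-integrable setT
                              (EFin \o (fun d' => CE mu g' d' (Y t g a))))
  (* 2-MP (b) *)
  (hdL : 0 < dL) (hdLU : dL < dU)
  (* 2-MP (a): D | G=g is supported on D_+ and every d in D_+ is in its support *)
  (hsuppG : forall g, g \in Gset -> (g <= T)%N -> nuD g (~` Dplus dL dU) = 0%E)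
  (hsupp : forall g, g \in Gset -> (g <= T)%N -> forall x, Dplus dL dU x ->
             forall e : R, 0 < e -> (0 < nuD g (ball x e))%E)
  (* 2-MP (c) *)
  (hC1 : forall g t, g \in Gset -> (g <= T)%N -> (2 <= t <= T)%N ->
           exists f' : R -> R, {within Dplus dL dU, continuous f'} /\
             forall x, Dplus dL dU x ->
               deriv_within (Dplus dL dU) (EDeltaY mu Y T t g) x (f' x))
  (* 3-MP (a): no anticipation *)
  (hNA : forall t g a w, g \in Gset -> (t < g)%N -> Y t g a w = Y0 Y T t w)
  (g t1 t2 t3 t4 : nat) (d : R)
  (hg : g \in Gset) (hgT : g != T.+1)
  (ht : [/\ (1 <= t1)%N, (t1 <= t2)%N, (t2 < g)%N, (g <= t3)%N & (t3 <= t4 <= T)%N])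
  (hd : Dplus dL dU d) :
  (* (1) *)
  ((forall g' t, g' \in Gset -> (g' <= T)%N -> (2 <= t <= T)%N -> forall x, Dplus dL dU x ->
       CE mu g' x (fun w => Y0 Y T t w - Y0 Y T t.-1 w)
       = CE0 mu T (fun w => Y0 Y T t w - Y0 Y T t.-1 w)) ->
   (forall a b, Dplus dL dU a -> Dplus dL dU b ->
       exists pa pb, differentiable2_within (Dplus dL dU)
                       (ATTbar mu Y T t3 t4 g) a b pa pb) ->
   exists acrt pb : R,
     [/\ deriv_within (Dplus dL dU) (fun l => ATTbar mu Y T t3 t4 g l d) d acrt,
         deriv_within (Dplus dL dU) (fun l => ATTbar mu Y T t3 t4 g d l) d pb &
         deriv_within (Dplus dL dU) (ECondDiff mu Y T t1 t2 t3 t4 g) d (acrt + pb)])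
  /\
  (* (2) *)
  ((forall g' t, g' \in Gset -> (g' <= T)%N -> (2 <= t <= T)%N -> forall x, Dplus dL dU x ->
       CE mu g' x (fun w => Y t g' x w - Y0 Y T t.-1 w)
         = CEG mu nuD g' (fun w => Y t g' x w - Y0 Y T t.-1 w)
       /\ CE mu g' x (fun w => Y0 Y T t w - Y0 Y T t.-1 w)
         = CE0 mu T (fun w => Y0 Y T t w - Y0 Y T t.-1 w)) ->
   exists acr : R,
     deriv_within (Dplus dL dU) (ATEbar mu nuD Y T t3 t4 g) d acr /\
     deriv_within (Dplus dL dU) (ECondDiff mu Y T t1 t2 t3 t4 g) d acr).
Proof.
have /andP[g_ge2 gT1] := hG g hg.
have gT : (g <= T)%N by move: gT1; rewrite leq_eqVlt ltnS (negbTE hgT).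
have Y_integrable t g' a y : (mu g y).-integrable setT (EFin \o Y t g' a) := hint t g' a g y.
split.
- move=> parallel_trends joint_diff.
  have [pa [pb Hd]] := joint_diff d d hd hd.
  exists pa, pb; split; [exact: deriv_within_partial1 Hd | exact: deriv_within_partial2 Hd |].
  apply: (deriv_within_shift hd _ (deriv_within_diag Hd)) => y Iy.
  apply: (ECondDiff_ATTbar (I := Dplus dL dU) Y_integrable ht _ Iy) => t ht' x Ix.
  exact: parallel_trends.
- move=> mp5.
  have [l hl] : {l : nat -> R & forall u, (2 <= u <= T)%N ->
      deriv_within (Dplus dL dU) (EDeltaY mu Y T u g) d (l u)}.
    apply: (@choice nat R (fun u v => (2 <= u <= T)%N ->
      deriv_within (Dplus dL dU) (EDeltaY mu Y T u g) d v)) => u.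
    case: (boolP (2 <= u <= T)%N) => [hu | _]; last by exists 0.
    by have [f' [_ Hf']] := hC1 g u hg gT hu; exists (f' d) => _; apply: Hf'.
  have dECond := ECondDiff_deriv Y_integrable ht hl.
  eexists; split; last exact: dECond.
  apply: (deriv_within_shift hd _ dECond) => y Iy.
  apply: (ATEbar_ECondDiff (I := Dplus dL dU) Y_integrable ht _ _ _ g_ge2 Iy).
  + by move=> t ht' x Ix; exact: (mp5 g t hg gT ht' x Ix).2.
  + by move=> t g' a; exact: hintG.
  + by move=> t ht' x Ix; exact: (mp5 g t hg gT ht' x Ix).1.
Qed.
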